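(* Let $\lambda>0$, $2<q<3$, let $\kappa$ be a constant with $2^{2-q}\le\kappa\le q2^{1-q}$, and let $h:\mathbb{R}\to[0,+\infty]$ be convex and $C^1$ on $(0,\infty)$ with $\lim_{t\to0^+}h(t)=+\infty$, $\liminf_{t\to\infty}h(t)/t>0$, $h(t)=+\infty$ for $t\le0$, and suppose $h'(\lambda^3)\ge0$. Define $\mathcal{F}_2(A)=(\kappa/2)|A-\lambda\mathbf{1}|^q+\lambda h'(\lambda^3)G(A)$. Then $\mathcal{F}_2(A)\ge0$ for all $A\in\mathbb{R}^{3\times3}$ provided $$\lambda h'(\lambda^3)\le\inf_{c_0>0}\left\{\frac{\kappa}{2}\max\left\{\frac{c_0^{q-2}}{M_2(\lambda,c_0)},\frac{c_0^{q-3}}{M_3(\lambda,c_0)}\right\}\right\}.$$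
   Context: For $A\in\mathbb{R}^{3\times3}$ let $\lambda_1(A),\lambda_2(A),\lambda_3(A)$ be its singular values, $P(A)=\sum_{1\le i<j\le3}\lambda_i(A)\lambda_j(A)-\lambda\sum_i\lambda_i(A)$, $N(A)=\operatorname{tr}\operatorname{cof}A-\lambda\operatorname{tr}A$ (cof the cofactor matrix), and $G(A)=P(A)-N(A)$. $|\cdot|$ is the Frobenius norm and $\mathbf{1}$ the identity. For $c_0>0$: $M_2(\lambda,c_0)=\sup\{|G(A)|/|A-\lambda\mathbf{1}|^2:\ |A-\lambda\mathbf{1}|\ge c_0\}$ and $M_3(\lambda,c_0)=\sup\{|G(A)|/|A-\lambda\mathbf{1}|^3:\ 0<|A-\lambda\mathbf{1}|<c_0\}$. *)

From HB Require Import structures.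
From mathcomp Require Import all_boot all_order all_algebra.
From mathcomp Require Import all_classical all_reals all_analysis.
Set Implicit Arguments. Unset Strict Implicit. Unset Printing Implicit Defensive.
Import Order.TTheory GRing.Theory Num.Theory.
Import numFieldNormedType.Exports.
Local Open Scope classical_set_scope.
Local Open Scope ring_scope.

Section Defs.
Variable R : realType.

Definition fnorm (A : 'M[R]_3) : R :=
  Num.sqrt (\sum_(i < 3) \sum_(j < 3) A i j ^+ 2).

(* s is a vector of singular values of A: nonnegative, and their squares are
   the eigenvalues (with multiplicity) of A^T A, i.e. the roots of its
   characteristic polynomial. *)
Definition is_sing_vals (A : 'M[R]_3) (s : 'rV[R]_3) : Prop :=
  (forall i, 0 <= s 0 i) /\
  char_poly (A^T *m A) = \prod_(i < 3) ('X - (s 0 i ^+ 2)%:P).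

(* the singular values lambda_1(A), lambda_2(A), lambda_3(A) (in some order;
   everything below is symmetric in them) *)
Definition sing_vals (A : 'M[R]_3) : 'rV[R]_3 := xget 0 (is_sing_vals A).

Definition Pfun (lam : R) (A : 'M[R]_3) : R :=
  let s := sing_vals A in
  \sum_(i < 3) \sum_(j < 3 | (i < j)%N) s 0 i * s 0 j - lam * \sum_(i < 3) s 0 i.

Definition tr_cof (A : 'M[R]_3) : R := \sum_(i < 3) cofactor A i i.

Definition Nfun (lam : R) (A : 'M[R]_3) : R := tr_cof A - lam * \tr A.

Definition Gfun (lam : R) (A : 'M[R]_3) : R := Pfun lam A - Nfun lam A.

Local Open Scope ereal_scope.

Definition M2 (lam c0 : R) : \bar R :=
  ereal_sup [set ((`|Gfun lam A| / fnorm (A - lam%:M) ^+ 2)%R)%:E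
            | A in [set A : 'M[R]_3 | (c0 <= fnorm (A - lam%:M))%R]].

Definition M3 (lam c0 : R) : \bar R :=
  ereal_sup [set ((`|Gfun lam A| / fnorm (A - lam%:M) ^+ 3)%R)%:E
            | A in [set A : 'M[R]_3 | (0 < fnorm (A - lam%:M) < c0)%R]].

End Defs.

From Pilot Require Import Defs.
From HB Require Import structures.
From mathcomp Require Import all_boot all_order all_algebra.
From mathcomp Require Import all_classical all_reals all_analysis.
From mathcomp Require Import ring lra.
Set Implicit Arguments. Unset Strict Implicit. Unset Printing Implicit Defensive.
Import Order.TTheory GRing.Theory Num.Theory.
Import numFieldNormedType.Exports.
Local Open Scope classical_set_scope.
Local Open Scope ring_scope.

(* Put d = λ h'(λ^3) (the case d = 0 is trivial) and call A bad when
   F2(A) = (κ/2) |A - λ1|^q + d G(A) < 0.  If A and B are bad and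
   |A - λ1| < |B - λ1| =: c0, then B bounds M2(λ, c0) from below and A bounds
   M3(λ, c0) from below, so both terms of the max fall below 2d/κ, against the
   hypothesis at c0: all bad matrices lie at the same distance from λ1.  Right
   multiplication by a rotation V keeps the singular values, hence P, while
   tr cof (AV) = tr (cof A V) and |AV - λ1|^2 = |A|^2 - 2 λ tr (AV) + 3 λ^2
   depend continuously on V.  So a bad A stays bad under small rotations in
   each coordinate plane, which therefore must not move tr (AV); this forces A
   to be symmetric with zero diagonal, and one more rotation forces A = 0,
   which is not bad. *)

Section Coordinates.
Variable R : comNzRingType.
Implicit Types (A B M : 'M[R]_3) (i j : nat).

(* Entries at nat indices, so that 3x3 identities follow by case analysis and
   [ring]; an index >= 3 is read as 0 by [inord]. *)
Definition ent A i j : R := A (inord i) (inord j).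

Lemma entE A (i j : 'I_3) : A i j = ent A i j.
Proof. by rewrite /ent !inord_val. Qed.

Lemma ent_sub A B i j : ent (A - B) i j = ent A i j - ent B i j.
Proof. by rewrite /ent !mxE. Qed.

Lemma ent_scalar (c : R) i j : (i < 3)%N -> (j < 3)%N ->
  ent c%:M i j = if i == j then c else 0.
Proof. by move=> i3 j3; rewrite /ent mxE -val_eqE /= !inordK //; case: eqP. Qed.

Lemma ent_scale (c : R) A i j : ent (c *: A) i j = c * ent A i j.
Proof. by rewrite /ent mxE. Qed.

Lemma ent_tr A i j : ent A^T i j = ent A j i.
Proof. by rewrite /ent mxE. Qed.

Lemma ent_mul A B i j :
  ent (A *m B) i j = ent A i 0 * ent B 0 j + ent A i 1 * ent B 1 j + ent A i 2 * ent B 2 j.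
Proof.
rewrite {1}/ent mxE (eq_bigr (fun k : 'I_3 => ent A i k * ent B k j)).
  by rewrite !big_ord_recr big_ord0 /= add0r.
by move=> k _; rewrite /ent !inord_val.
Qed.

Lemma mx3P A B :
  (forall i j, (i < 3)%N -> (j < 3)%N -> ent A i j = ent B i j) -> A = B.
Proof. by move=> AB; apply/matrixP => i j; rewrite !entE AB. Qed.

Lemma det_mx22 (M : 'M[R]_2) : \det M = M 0 0 * M 1 1 - M 0 1 * M 1 0.
Proof.
rewrite (expand_det_row _ 0) !big_ord_recr big_ord0 /cofactor !det_mx11 /= !mxE /bump /=.
have -> : widen_ord (leqnSn 1) ord_max = 0 :> 'I_2 by apply/val_inj.
have -> : lift 0 0 = 1 :> 'I_2 by apply/val_inj.
have -> : lift ord_max 0 = 0 :> 'I_2 by apply/val_inj.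
have -> : ord_max = 1 :> 'I_2 by apply/val_inj.
ring.
Qed.

Lemma mxtrace3 A : \tr A = ent A 0 0 + ent A 1 1 + ent A 2 2.
Proof. by rewrite /mxtrace !big_ord_recr big_ord0 !entE /=; ring. Qed.

End Coordinates.

Section PlaneRotations.
Variable R : realFieldType.
Implicit Types (M : 'M[R]_3) (i j : nat) (e : R).

(* cos and sin of the angle 2 atan e, as rational functions of e *)
Definition rcos e := (1 - e ^+ 2) / (1 + e ^+ 2).
Definition rsin e := 2 * e / (1 + e ^+ 2).

Lemma rsinN e : rsin (- e) = - rsin e.
Proof. by rewrite /rsin sqrrN mulrN mulNr. Qed.

Lemma rcosN e : rcos (- e) = rcos e.
Proof. by rewrite /rcos sqrrN. Qed.

Lemma oneDsqr_neq0 e : 1 + e ^+ 2 != 0.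
Proof. by rewrite lt0r_neq0 // ltr_pwDl // sqr_ge0. Qed.

Lemma rsin_gt0 e : 0 < e -> 0 < rsin e.
Proof. by move=> e0; rewrite /rsin divr_gt0 ?mulr_gt0 // ltr_pwDl // sqr_ge0. Qed.

Lemma rcos_lt1 e : e != 0 -> rcos e < 1.
Proof.
move=> e0; have e2 : 0 < e ^+ 2 by rewrite lt0r sqr_ge0 sqrf_eq0 e0.
by rewrite /rcos ltr_pdivrMr ?mul1r; lra.
Qed.

Definition plane_rot_coef i j e (a b : nat) : R :=
  if a == b then (if (a == i) || (a == j) then rcos e else 1)
  else if (a == i) && (b == j) then - rsin e
  else if (a == j) && (b == i) then rsin e
  else 0.

Definition plane_rot i j e : 'M[R]_3 := \matrix_(a, b) plane_rot_coef i j e a b.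

Lemma ent_plane_rot i j e a b : (a < 3)%N -> (b < 3)%N ->
  ent (plane_rot i j e) a b = plane_rot_coef i j e a b.
Proof. by move=> a3 b3; rewrite /ent mxE !inordK. Qed.

Lemma plane_rot_orthogonal i j e : (i < j < 3)%N ->
  (plane_rot i j e)^T *m plane_rot i j e = 1%:M.
Proof.
move=> /andP[ij j3]; have den := oneDsqr_neq0 e.
apply: mx3P => a b a3 b3; rewrite ent_mul !ent_tr !ent_plane_rot // ent_scalar //.
case: j j3 ij => [|[|[|//]]] // _; case: i => [|[|//]] // _;
  case: a a3 => [|[|[|//]]] _; case: b b3 => [|[|[|//]]] _;
  by rewrite /plane_rot_coef /rcos /rsin /=; field.
Qed.

Lemma ent_mul_plane_rot i j e M : (i < j < 3)%N ->
  ent (M *m plane_rot i j e) i i = ent M i i * rcos e + ent M i j * rsin e.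
Proof.
move=> /andP[ij j3]; case: j j3 ij => [|[|[|//]]] // _; case: i => [|[|//]] // _.
all: by rewrite ent_mul !ent_plane_rot // /plane_rot_coef /=; ring.
Qed.

Definition tr_shift i j M e :=
  (ent M i i + ent M j j) * (rcos e - 1) + (ent M i j - ent M j i) * rsin e.

Lemma mxtrace_mul_plane_rot i j e M : (i < j < 3)%N ->
  \tr (M *m plane_rot i j e) = \tr M + tr_shift i j M e.
Proof.
move=> /andP[ij j3]; rewrite !mxtrace3 !ent_mul !ent_plane_rot // /tr_shift.
case: j j3 ij => [|[|[|//]]] // _; case: i => [|[|//]] // _;
  rewrite /plane_rot_coef /=; ring.
Qed.

Lemma continuous_rcos : continuous rcos.
Proof.
move=> x; rewrite /rcos; apply: cvgM.
  by apply: cvgB; [exact: cvg_cst | exact: cvgM cvg_id cvg_id].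
by apply: cvgV; [exact: oneDsqr_neq0 | apply: cvgD; [exact: cvg_cst | exact: cvgM cvg_id cvg_id]].
Qed.

Lemma continuous_rsin : continuous rsin.
Proof.
move=> x; rewrite /rsin; apply: cvgM.
  by apply: cvgM; [exact: cvg_cst | exact: cvg_id].
by apply: cvgV; [exact: oneDsqr_neq0 | apply: cvgD; [exact: cvg_cst | exact: cvgM cvg_id cvg_id]].
Qed.

Lemma tr_shift_cvg0 i j M : tr_shift i j M e @[e --> 0] --> 0.
Proof.
have tr_shift_cont : {for 0, continuous (tr_shift i j M)}.
  apply: cvgD; apply: cvgM; try exact: cvg_cst; try exact: continuous_rsin.
  by apply: cvgB; [exact: continuous_rcos | exact: cvg_cst].
have tr_shift0 : tr_shift i j M 0 = 0.
  by rewrite /tr_shift /rcos /rsin expr0n /=; field.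
by move: tr_shift_cont; rewrite /prop_for /continuous_at tr_shift0.
Qed.

Lemma tr_shift_eq0 i j M u : u != 0 ->
  tr_shift i j M u = 0 -> tr_shift i j M (- u) = 0 ->
  ent M i i + ent M j j = 0 /\ ent M i j = ent M j i.
Proof.
move=> u0; rewrite /tr_shift rcosN rsinN => Eu Emu.
have c1 : rcos u - 1 != 0 by rewrite subr_eq0 lt_eqF // rcos_lt1.
have s0 : rsin u != 0.
  by rewrite /rsin mulf_neq0 ?invr_eq0 ?oneDsqr_neq0 // mulf_neq0 // pnatr_eq0.
have T0 : ent M i i + ent M j j = 0 by apply: (mulIf c1); rewrite mul0r; lra.
have S0 : ent M i j - ent M j i = 0 by apply: (mulIf s0); rewrite mul0r; lra.
by split; [ | apply/eqP; rewrite -subr_eq0 S0].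
Qed.

End PlaneRotations.

Section InvariantsUnderRotation.
Variable R : realType.
Implicit Types (A : 'M[R]_3) (i j : nat) (e : R).

Lemma tr_cof3 A : tr_cof A =
  ent A 1 1 * ent A 2 2 - ent A 1 2 * ent A 2 1
  + (ent A 0 0 * ent A 2 2 - ent A 0 2 * ent A 2 0)
  + (ent A 0 0 * ent A 1 1 - ent A 0 1 * ent A 1 0).
Proof.
rewrite /tr_cof !big_ord_recr big_ord0 /cofactor !det_mx22 /= !mxE !entE /= /bump /=.
ring.
Qed.

Lemma ent_adj_tr A i j : ent (\adj A)^T i j = cofactor A (inord i) (inord j).
Proof. by rewrite /ent !mxE. Qed.

Lemma tr_cof_mul_plane_rot i j e A : (i < j < 3)%N ->
  tr_cof (A *m plane_rot i j e) = tr_cof A + tr_shift i j (\adj A)^T e.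
Proof.
move=> /andP[ij j3]; have den := oneDsqr_neq0 e.
rewrite !tr_cof3 !ent_mul !ent_plane_rot // /tr_shift !ent_adj_tr /cofactor !det_mx22 !mxE !entE.
case: j j3 ij => [|[|[|//]]] // _; case: i => [|[|//]] // _;
  rewrite /plane_rot_coef /= /bump !inordK //=.
all: by rewrite /rcos /rsin; field.
Qed.

Lemma fnorm_sqr3 A : fnorm A ^+ 2 =
  ent A 0 0 ^+ 2 + ent A 0 1 ^+ 2 + ent A 0 2 ^+ 2 +
  ent A 1 0 ^+ 2 + ent A 1 1 ^+ 2 + ent A 1 2 ^+ 2 +
  ent A 2 0 ^+ 2 + ent A 2 1 ^+ 2 + ent A 2 2 ^+ 2.
Proof.
rewrite /fnorm sqr_sqrtr; last by do 2!(apply: sumr_ge0 => ? _); exact: sqr_ge0.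
by rewrite !big_ord_recr !big_ord0 !entE /=; ring.
Qed.

Lemma fnorm_ge0 A : 0 <= fnorm A.
Proof. exact: sqrtr_ge0. Qed.

Lemma fnorm_eq0 A : fnorm A = 0 -> A = 0.
Proof.
move=> A0; have := fnorm_sqr3 A; rewrite A0 expr0n /= => sum0.
apply: mx3P => a b a3 b3; rewrite /ent mxE; apply/eqP; rewrite -sqrf_eq0 -/(ent A a b).
have := sqr_ge0 (ent A 0 0); have := sqr_ge0 (ent A 0 1); have := sqr_ge0 (ent A 0 2).
have := sqr_ge0 (ent A 1 0); have := sqr_ge0 (ent A 1 1); have := sqr_ge0 (ent A 1 2).
have := sqr_ge0 (ent A 2 0); have := sqr_ge0 (ent A 2 1); have := sqr_ge0 (ent A 2 2).
by case: a a3 => [|[|[|//]]] _; case: b b3 => [|[|[|//]]] _ /= *; apply/eqP; lra.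
Qed.

Lemma fnorm_mul_plane_rot i j e (l : R) A : (i < j < 3)%N ->
  fnorm (A *m plane_rot i j e - l%:M) ^+ 2 = fnorm (A - l%:M) ^+ 2 - 2 * l * tr_shift i j A e.
Proof.
move=> /andP[ij j3]; have den := oneDsqr_neq0 e.
rewrite !fnorm_sqr3 !ent_sub !ent_scalar // !ent_mul !ent_plane_rot // /tr_shift.
case: j j3 ij => [|[|[|//]]] // _; case: i => [|[|//]] // _.
all: by rewrite /plane_rot_coef /rcos /rsin /=; field.
Qed.

End InvariantsUnderRotation.

Lemma char_poly_conj (R : comNzRingType) n (W M V : 'M[R]_n) :
  W *m V = 1%:M -> char_poly (W *m M *m V) = char_poly M.
Proof.
move=> WV; have WVP : map_mx (@polyC R) W *m map_mx polyC V = 1%:M.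
  by rewrite -map_mxM WV map_mx1.
have conjP : char_poly_mx (W *m M *m V) =
    map_mx polyC W *m char_poly_mx M *m map_mx polyC V.
  by rewrite /char_poly_mx mulmxBr mulmxBl !map_mxM mul_mx_scalar -scalemxAl WVP scalemx1.
by rewrite /char_poly conjP !det_mulmx mulrAC -det_mulmx WVP det1 mul1r.
Qed.

Section SingularValues.
Variable R : realType.
Implicit Types (A V : 'M[R]_3) (l : R).

Lemma is_sing_vals_mulmx A V : V^T *m V = 1%:M ->
  is_sing_vals (A *m V) = is_sing_vals A.
Proof.
move=> VV; apply/funext => s; apply/propext.
by rewrite /is_sing_vals trmx_mul mulmxA -(mulmxA _ _ A) char_poly_conj.
Qed.

Lemma Pfun_mulmx l A V : V^T *m V = 1%:M -> Defs.Pfun l (A *m V) = Defs.Pfun l A.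
Proof. by move=> VV; rewrite /Defs.Pfun /sing_vals is_sing_vals_mulmx. Qed.

Lemma sing_vals_scalar (mu : R) k : 0 <= mu -> sing_vals (mu%:M : 'M[R]_3) 0 k = mu.
Proof.
move=> mu0; set s := sing_vals _.
have cp : char_poly ((mu%:M : 'M[R]_3)^T *m mu%:M) = \prod_(i < 3) ('X - (mu ^+ 2)%:P).
  rewrite tr_scalar_mx -scalar_mxM char_poly_trig ?scalar_mx_is_trig //.
  by apply: eq_bigr => i _; rewrite mxE eqxx mulr1n expr2.
have [s0 s_char] : is_sing_vals (mu%:M : 'M[R]_3) s.
  apply: xgetPex; exists (const_mx mu); split => [i|]; first by rewrite mxE.
  by rewrite cp; apply: eq_bigr => i _; rewrite mxE.
have := congr1 (horner^~ (s 0 k ^+ 2)) s_char.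
rewrite cp !horner_prod [in X in _ = X](bigD1 k) //= !hornerXsubC subrr mul0r.
rewrite prodr_const card_ord => /eqP; rewrite expf_eq0 /= subr_eq0 eqf_sqr.
by case/orP => /eqP smu; have := s0 k; lra.
Qed.

Lemma Gfun_scalar l (mu : R) : 0 <= mu -> Gfun l (mu%:M : 'M[R]_3) = 0.
Proof.
move=> mu0; rewrite /Gfun /Defs.Pfun /Nfun tr_cof3 mxtrace3 !ent_scalar //=.
under eq_bigr do rewrite big_mkcond.
rewrite !big_ord_recr !big_ord0 /= !sing_vals_scalar //; ring.
Qed.

Lemma Gfun_mul_plane_rot i j e l A : (i < j < 3)%N ->
  Gfun l (A *m plane_rot i j e) = Gfun l A - tr_shift i j ((\adj A)^T - l *: A) e.
Proof.
move=> ij; rewrite /Gfun /Nfun Pfun_mulmx ?plane_rot_orthogonal //.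
rewrite tr_cof_mul_plane_rot // mxtrace_mul_plane_rot // /tr_shift !ent_sub !ent_scale.
ring.
Qed.

End SingularValues.

Lemma continuous_powR (R : realType) (q a : R) : 0 < a ->
  {for a, continuous (fun x : R => x `^ q)}.
Proof.
move=> a0; apply: differentiable_continuous; apply/derivable1_diffP.
by apply: derivable_powR; rewrite in_itv /= a0.
Qed.

Lemma powRB_mulrn (R : realType) (r q : R) n : 0 < r -> r `^ (q - n%:R) * r ^+ n = r `^ q.
Proof.
move=> r0; rewrite -powR_mulrn ?ltW // -powRD ?addrNK //.
by apply/implyP => _; rewrite gt_eqF.
Qed.

Lemma lee_div_fin (R : realType) (a g : R) (M : \bar R) : 0 <= a -> 0 < g ->
  (g%:E <= M)%E -> (a%:E / M <= (a / g)%:E)%E.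
Proof.
move=> a0 g0; case: M => [x| |] //=; last first.
  by move=> _; rewrite invey mule0 lee_fin divr_ge0 // ltW.
rewrite lee_fin => gx; have x0 : 0 < x by apply: lt_le_trans gx.
by rewrite inver gt_eqF //= -EFinM lee_fin ler_wpM2l // lef_pV2.
Qed.

Section NonnegativeF2.
Variables (R : realType) (k d l q : R).
Hypotheses (k_gt0 : 0 < k) (d_gt0 : 0 < d) (l_gt0 : 0 < l) (q_lt3 : q < 3).
Hypothesis d_le_max : forall c0 : R, 0 < c0 ->
  (d%:E <= k%:E * maxe ((c0 `^ (q - 2))%:E / M2 l c0) ((c0 `^ (q - 3))%:E / M3 l c0))%E.
Implicit Types (A B : 'M[R]_3) (i j : nat).

(* k and d stand for κ / 2 and λ h'(λ^3) *)
Definition F2 A := k * fnorm (A - l%:M) `^ q + d * Gfun l A.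

Lemma F2_scalar_ge0 (mu : R) : 0 <= mu -> 0 <= F2 mu%:M.
Proof. by move=> mu0; rewrite /F2 Gfun_scalar // mulr0 addr0 mulr_ge0 ?powR_ge0 ?ltW. Qed.

Lemma F2_lt0_fnorm_gt0 A : F2 A < 0 -> 0 < fnorm (A - l%:M).
Proof.
move=> FA; rewrite lt_def fnorm_ge0 andbT; apply/eqP => /fnorm_eq0/eqP.
by rewrite subr_eq0 => /eqP Al; move: FA; rewrite Al ltNge F2_scalar_ge0 // ltW.
Qed.

Lemma F2_lt0_Gfun A : F2 A < 0 -> k * fnorm (A - l%:M) `^ q < d * `|Gfun l A|.
Proof.
rewrite /F2 => FA; have kP : 0 <= k * fnorm (A - l%:M) `^ q by rewrite mulr_ge0 ?powR_ge0 ?ltW.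
have G0 : Gfun l A < 0 by rewrite -(pmulr_rlt0 _ d_gt0); lra.
by rewrite ltr0_norm // mulrN; lra.
Qed.

Lemma F2_lt0_normG_gt0 A : F2 A < 0 -> 0 < `|Gfun l A|.
Proof.
move=> /F2_lt0_Gfun GA; rewrite -(pmulr_rgt0 _ d_gt0) (le_lt_trans _ GA) //.
by rewrite mulr_ge0 ?powR_ge0 ?ltW.
Qed.

Lemma F2_lt0_ratio A : F2 A < 0 -> fnorm (A - l%:M) `^ q / `|Gfun l A| < d / k.
Proof.
move=> FA; rewrite ltr_pdivrMr ?F2_lt0_normG_gt0 //.
by rewrite mulrAC ltr_pdivlMr // mulrC F2_lt0_Gfun.
Qed.

Lemma M2_lt A : F2 A < 0 ->
  ((fnorm (A - l%:M) `^ (q - 2))%:E / M2 l (fnorm (A - l%:M)) < (d / k)%:E)%E.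
Proof.
move=> FA; set r := fnorm (A - l%:M); have r0 := F2_lt0_fnorm_gt0 FA.
have g0 : 0 < `|Gfun l A| / r ^+ 2 by rewrite divr_gt0 ?F2_lt0_normG_gt0 ?exprn_gt0.
apply: (le_lt_trans (lee_div_fin (powR_ge0 _ _) g0 _)).
  by apply: ereal_sup_ubound; exists A => //=.
by rewrite lte_fin invf_div mulrA powRB_mulrn // F2_lt0_ratio.
Qed.

Lemma M3_lt A c : F2 A < 0 -> fnorm (A - l%:M) < c ->
  ((c `^ (q - 3))%:E / M3 l c < (d / k)%:E)%E.
Proof.
move=> FA rc; set r := fnorm (A - l%:M) in rc; have r0 := F2_lt0_fnorm_gt0 FA.
have G0 := F2_lt0_normG_gt0 FA.
have g0 : 0 < `|Gfun l A| / r ^+ 3 by rewrite divr_gt0 ?exprn_gt0.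
apply: (le_lt_trans (lee_div_fin (powR_ge0 _ _) g0 _)).
  by apply: ereal_sup_ubound; exists A => //=; rewrite r0 rc.
have cr : c `^ (q - 3) < r `^ (q - 3).
  have c0 : 0 < c := lt_trans r0 rc.
  rewrite -(opprB 3 q) !powRN ltf_pV2 ?posrE ?powR_gt0 //.
  by apply: gt0_ltr_powR; rewrite ?subr_gt0 // nnegrE ltW.
rewrite lte_fin invf_div mulrA (lt_trans _ (F2_lt0_ratio FA)) //.
by rewrite -(powRB_mulrn q 3 r0) !ltr_pM2r ?invr_gt0 ?exprn_gt0.
Qed.

(* The hypothesis at c0 = |B - λ1|, where B witnesses M2 and A witnesses M3. *)
Lemma F2_lt0_fnorm_eq A B : F2 A < 0 -> F2 B < 0 -> fnorm (A - l%:M) = fnorm (B - l%:M).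
Proof.
wlog AB : A B / fnorm (A - l%:M) < fnorm (B - l%:M).
  move=> wlogH FA FB.
  case: (ltgtP (fnorm (A - l%:M)) (fnorm (B - l%:M))) => // [AB | BA].
    exact: wlogH.
  exact/esym/wlogH.
move=> FA FB; have := d_le_max (F2_lt0_fnorm_gt0 FB); rewrite leNgt => /negP[].
have -> : d%:E = (k%:E * (d / k)%:E)%E by rewrite -EFinM mulrC divfK ?gt_eqF.
rewrite lte_pmul2l ?lte_fin //.
by rewrite gt_max M2_lt // (M3_lt FA AB).
Qed.

Lemma F2_mul_plane_rot_cvg i j A : (i < j < 3)%N -> 0 < fnorm (A - l%:M) ->
  F2 (A *m plane_rot i j e) @[e --> 0] --> F2 A.
Proof.
move=> ij r_gt0; set r := fnorm (A - l%:M) in r_gt0 *; set C := (\adj A)^T - l *: A.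
have F2_rot e : F2 (A *m plane_rot i j e) = k * Num.sqrt (r ^+ 2 - 2 * l * tr_shift i j A e) `^ q
    + d * (Gfun l A - tr_shift i j C e).
  by rewrite /F2 -fnorm_mul_plane_rot // sqrtr_sqr ger0_norm ?fnorm_ge0 // Gfun_mul_plane_rot.
have r_cvg : Num.sqrt (r ^+ 2 - 2 * l * tr_shift i j A e) @[e --> 0] --> r.
  rewrite -[X in _ --> X]ger0_norm ?fnorm_ge0 // -sqrtr_sqr.
  apply: continuous_cvg; first exact: sqrt_continuous.
  rewrite [X in _ --> X](_ : _ = r ^+ 2 - 2 * l * 0); last by rewrite mulr0 subr0.
  by apply: cvgB; [exact: cvg_cst | apply: cvgM; [exact: cvg_cst | exact: tr_shift_cvg0]].
rewrite (funext F2_rot) [F2 A](_ : _ = k * r `^ q + d * (Gfun l A - 0)); last first.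
  by rewrite subr0.
apply: cvgD; apply: cvgM; try exact: cvg_cst.
  exact: (continuous_cvg _ (@continuous_powR _ q _ r_gt0) r_cvg).
by apply: cvgB; [exact: cvg_cst | exact: tr_shift_cvg0].
Qed.

Lemma F2_lt0_rot i j A : (i < j < 3)%N -> F2 A < 0 ->
  exists2 u, 0 < u & forall e, `|e| <= u -> F2 (A *m plane_rot i j e) < 0.
Proof.
move=> ij FA; have F2_cvg := F2_mul_plane_rot_cvg ij (F2_lt0_fnorm_gt0 FA).
have [eps /= eps0 near0] := nbhs_norm0P.1 (cvgr_lt _ F2_cvg _ FA).
exists (eps / 2) => [|e e_le]; first by rewrite divr_gt0.
by apply: near0; rewrite /= (le_lt_trans e_le) // ltr_pdivrMr // ltr_pMr // ltr1n.
Qed.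

Lemma F2_lt0_plane_sym i j A : (i < j < 3)%N -> F2 A < 0 ->
  ent A i i + ent A j j = 0 /\ ent A i j = ent A j i.
Proof.
move=> ij FA; have [u u0 F2u] := F2_lt0_rot ij FA.
have shift0 e : `|e| <= u -> tr_shift i j A e = 0.
  move=> /F2u /(F2_lt0_fnorm_eq FA) rot_fnorm.
  have := fnorm_mul_plane_rot e l A ij; rewrite -rot_fnorm => /eqP.
  rewrite -subr_eq0 opprB addrC subrK !mulf_eq0 (negbTE (lt0r_neq0 l_gt0)) orbF.
  by rewrite pnatr_eq0 => /eqP.
by apply: (tr_shift_eq0 (u := u)); rewrite ?gt_eqF ?shift0 ?normrN ?gtr0_norm.
Qed.

Lemma F2_lt0_diag0 a A : (a < 3)%N -> F2 A < 0 -> ent A a a = 0.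
Proof.
move=> a3 FA; have [d01 _] := F2_lt0_plane_sym (isT : (0 < 1 < 3)%N) FA.
have [d02 _] := F2_lt0_plane_sym (isT : (0 < 2 < 3)%N) FA.
have [d12 _] := F2_lt0_plane_sym (isT : (1 < 2 < 3)%N) FA.
by case: a a3 => [|[|[|//]]] _; lra.
Qed.

(* A and its small rotations in the plane (i, j) are bad, so both have zero
   diagonal; the (i, i) entry of the rotated matrix is then a_ij rsin u. *)
Lemma F2_lt0_offdiag0 i j A : (i < j < 3)%N -> F2 A < 0 -> ent A i j = 0.
Proof.
move=> ij FA; have i3 : (i < 3)%N by case/andP: ij => /ltn_trans; apply.
have [u u0 F2u] := F2_lt0_rot ij FA.
have := F2_lt0_diag0 i3 (F2u u _); rewrite gtr0_norm // => /(_ (lexx u)).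
rewrite ent_mul_plane_rot // F2_lt0_diag0 // mul0r add0r => /eqP.
by rewrite mulf_eq0 (negbTE (lt0r_neq0 (rsin_gt0 u0))) orbF => /eqP.
Qed.

Lemma F2_lt0_eq0 A : F2 A < 0 -> A = 0.
Proof.
move=> FA; apply: mx3P => a b a3 b3; rewrite [RHS]/ent mxE.
case: (ltngtP a b) => [ab | ba | ->]; last exact: F2_lt0_diag0.
  by apply: F2_lt0_offdiag0 => //; rewrite ab.
have ba3 : (b < a < 3)%N by rewrite ba.
by rewrite -(F2_lt0_plane_sym ba3 FA).2 F2_lt0_offdiag0.
Qed.

Lemma F2_ge0 A : 0 <= F2 A.
Proof.
rewrite leNgt; apply/negP => FA; have := F2_scalar_ge0 (lexx 0).
by rewrite raddf0 -(F2_lt0_eq0 FA) leNgt FA.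
Qed.

End NonnegativeF2.

Unset Implicit Arguments.
Set Strict Implicit.

Theorem lemma3p2 (R : realType) (lam q kappa : R) (h : R -> \bar R) :
  0 < lam ->
  2 < q < 3 ->
  2 `^ (2 - q) <= kappa <= q * 2 `^ (1 - q) ->
  (* h : R -> [0, +oo] *)
  (forall t : R, (0 <= h t)%E) ->
  (* h convex *)
  (forall x y t : R, 0 <= t <= 1 ->
     (h (t * x + (1 - t) * y)%R <= t%:E * h x + (1 - t)%:E * h y)%E) ->
  (* h is (finite and) C^1 on (0, +oo) *)
  (forall t : R, 0 < t -> h t \is a fin_num) ->
  (forall t : R, 0 < t -> derivable (fine \o h) t 1) ->
  (forall t : R, 0 < t -> {for t, continuous (derive1 (fine \o h))}) ->
  (* lim_{t -> 0+} h t = +oo *)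
  h x @[x --> 0^'+] --> +oo%E ->
  (* liminf_{t -> oo} h(t)/t > 0 *)
  (0 < limf_einf (fun t : R => h t * (t^-1)%:E) (pinfty_nbhs R))%E ->
  (* h = +oo on (-oo, 0] *)
  (forall t : R, t <= 0 -> h t = +oo%E) ->
  0 <= derive1 (fine \o h) (lam ^+ 3) ->
  ((lam * derive1 (fine \o h) (lam ^+ 3))%:E <=
     ereal_inf [set ((kappa / 2)%R%:E *
                     maxe ((c0 `^ (q - 2))%R%:E / M2 lam c0)
                          ((c0 `^ (q - 3))%R%:E / M3 lam c0))%E
               | c0 in [set c0 : R | (0 < c0)%R]])%E ->
  forall A : 'M[R]_3,
    0 <= kappa / 2 * fnorm (A - lam%:M) `^ q
         + lam * derive1 (fine \o h) (lam ^+ 3) * Gfun lam A.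
Proof.
move=> lam_gt0 /andP[_ q_lt3] /andP[kappa_ge _] _ _ _ _ _ _ _ _ h'_ge0 d_le_inf A.
set d := lam * _ in d_le_inf *.
have k_gt0 : 0 < kappa / 2 by rewrite divr_gt0 // (lt_le_trans _ kappa_ge) ?powR_gt0.
have [d0 | d_neq0] := eqVneq d 0.
  by rewrite d0 mul0r addr0 mulr_ge0 ?powR_ge0 ?(ltW k_gt0).
have d_gt0 : 0 < d by rewrite lt0r d_neq0 mulr_ge0 // ltW.
have d_le_max c0 : 0 < c0 -> (d%:E <= (kappa / 2)%:E *
    maxe ((c0 `^ (q - 2))%:E / M2 lam c0) ((c0 `^ (q - 3))%:E / M3 lam c0))%E.
  by move=> c0_gt0; apply: le_trans d_le_inf _; apply: ereal_inf_lbound; exists c0.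
exact: (F2_ge0 k_gt0 d_gt0 lam_gt0 q_lt3 d_le_max A).
Qed.
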